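(* Let $m,n\ge1$. Every $A\in\mathbb{R}^{m\times n}$ can be written as $A=B+C$ with $B,C\in\mathscr{L}_{m,n}$.
   Context: $\Vert\cdot\Vert$ is the supremum norm; a real $m\times n$ matrix $A$ is a Liouville matrix if $A\mathbf{q}-\mathbf{p}\neq\mathbf{0}$ for all nonzero $(\mathbf{q},\mathbf{p})\in\mathbb{Z}^n\times\mathbb{Z}^m$ and for every $N$ there exist $\mathbf{p}\in\mathbb{Z}^m$, $\mathbf{q}\in\mathbb{Z}^n\setminus\{\mathbf{0}\}$ with $\Vert A\mathbf{q}-\mathbf{p}\Vert<\Vert\mathbf{q}\Vert^{-N}$; $\mathscr{L}_{m,n}$ is the set of these. *)

From mathcomp Require Import all_boot all_order all_algebra.
From mathcomp Require Import reals.
Set Implicit Arguments. Unset Strict Implicit. Unset Printing Implicit Defensive.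
Import Order.TTheory GRing.Theory Num.Theory.
Local Open Scope ring_scope.

Definition supnorm (R : realType) (k : nat) (v : 'cV[R]_k) : R :=
  \big[Num.max/0]_(i < k) `|v i 0|.

Definition intvec (R : realType) (k : nat) (z : 'cV[int]_k) : 'cV[R]_k :=
  map_mx (fun x : int => x%:~R) z.

Definition liouville (R : realType) (m n : nat) (A : 'M[R]_(m, n)) : Prop :=
  (forall (q : 'cV[int]_n) (p : 'cV[int]_m),
      (q != 0) || (p != 0) -> A *m intvec R q - intvec R p != 0) /\
  (forall N : nat, exists (p : 'cV[int]_m) (q : 'cV[int]_n),
      q != 0 /\
      supnorm (A *m intvec R q - intvec R p) < (supnorm (intvec R q)) ^- N).

From HB Require Import structures.
From mathcomp Require Import all_boot all_order all_algebra.
From mathcomp Require Import all_classical all_reals all_analysis.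
From mathcomp Require Import ring lra.

Set Implicit Arguments.
Unset Strict Implicit.
Unset Printing Implicit Defensive.
Import Order.TTheory GRing.Theory Num.Theory numFieldNormedType.Exports.
Local Open Scope ring_scope.
Local Open Scope classical_set_scope.

(* Both the set of Liouville matrices and its reflection A - (Liouville set)
   are countable intersections of open dense subsets of the complete space of
   m x n real matrices: the non-vanishing conditions are open and dense, and
   "Mq - p is smaller than |q|^-N for some q" is open, and dense because
   matrices whose column j0 has a common denominator Q (so that
   M (Q e_j0) is an integer vector) are dense.  By Baire's theorem the two
   residual sets meet at some B, and then A = B + (A - B). *)

Section involutive_preimage.
Variables (T : topologicalType) (f : T -> T).
Hypotheses (fK : involutive f) (f_cont : continuous f).

Lemma open_involutive_preimage (S : set T) : open S -> open (f @^-1` S).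
Proof. by move=> oS; apply: open_comp => // x _; exact: f_cont. Qed.

Lemma dense_involutive_preimage (S : set T) : dense S -> dense (f @^-1` S).
Proof.
move=> dS O [x Ox] oO.
have [y [Ofy Sy]] : (f @^-1` O) `&` S !=set0.
  by apply: dS; [exists (f x); rewrite /= fK | exact: open_involutive_preimage].
by exists (f y); split; rewrite //= fK.
Qed.

End involutive_preimage.

Lemma norm_approx_dense (K : numFieldType) (V : normedModType K) (S : set V) :
  (forall x e, 0 < e -> exists2 y, S y & `|x - y| < e) -> dense S.
Proof.
move=> approxS O [x Ox] oO.
have /nbhs_ballP[e e0 xeO] : nbhs x O by rewrite openE in oO; exact: oO.
have [y Sy xy] := approxS x e e0.
by exists y; split => //; apply: xeO; rewrite -ball_normE.
Qed.

Lemma Baire_decomposition (R : realType) (U : completeNormedModType R)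
    (J : countType) (G : J -> set U) :
  (forall j, open (G j) /\ dense (G j)) ->
  forall a : U, exists b, (forall j, G j b) /\ (forall j, G j (a - b)).
Proof.
(* Enumerate the G j and their reflections a - G j as a single sequence. *)
move=> odG a; pose refl_a x : U := a - x.
have refl_aK : involutive refl_a by move=> x; rewrite /refl_a opprB addrC subrK.
have refl_a_cont : continuous refl_a.
  by move=> x; apply: continuousB => //; exact: cst_continuous.
pose F k := if unpickle k is Some (c, j) then
              (if c : bool then G j else refl_a @^-1` G j) else setT.
have odF k : open (F k) /\ dense (F k).
  rewrite /F; case: unpickle => [[[] j]|]; first exact: odG.
    have [oG dG] := odG j.
    by split; [exact: open_involutive_preimage | exact: dense_involutive_preimage].
  by split; [exact: openT | move=> O O0 _; rewrite setIT].
have [b [_ Fb]] := Baire odF (ex_intro _ 0 Logic.I) openT.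
exists b; split => j.
  by have := Fb (pickle (true, j)) Logic.I; rewrite /F pickleK.
by have := Fb (pickle (false, j)) Logic.I; rewrite /F pickleK.
Qed.

Section matrix_norm.
Variable R : realType.

Lemma normr_mx_entry m n (M : 'M[R]_(m, n)) i j : `|M i j| <= `|M|.
Proof.
by rewrite [leRHS]/Num.Def.normr /= mx_normrE; exact: (le_bigmax _ _ (i, j)).
Qed.

Lemma normr_mx_le m n (M : 'M[R]_(m, n)) c :
  0 <= c -> (forall i j, `|M i j| <= c) -> `|M| <= c.
Proof.
by move=> c0 Mc; rewrite [leLHS]/Num.Def.normr /= mx_normrE; apply: bigmax_le.
Qed.

Lemma normr_mx_lt m n (M : 'M[R]_(m, n)) c :
  0 < c -> (forall i j, `|M i j| < c) -> `|M| < c.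
Proof.
by move=> c0 Mc; rewrite [ltLHS]/Num.Def.normr /= mx_normrE; apply: bigmax_lt.
Qed.

Lemma supnormE k (v : 'cV[R]_k) : supnorm v = `|v|.
Proof.
rewrite /supnorm; apply/le_anti/andP; split.
  by apply: bigmax_le => // i _; exact: normr_mx_entry.
apply: normr_mx_le => [|i j]; first exact: bigmax_ge_id.
by rewrite [j]ord1; exact: (le_bigmax _ (fun i => `|v i 0|) i).
Qed.

Lemma normr_mulmx_le m n k (M : 'M[R]_(m, n)) (v : 'M[R]_(n, k)) :
  `|M *m v| <= n%:R * `|M| * `|v|.
Proof.
apply: normr_mx_le => [|i l]; first by rewrite !mulr_ge0.
rewrite mxE (le_trans (ler_norm_sum _ _ _)) // -mulrA mulr_natl.
rewrite -[n in _ *+ n]card_ord -sumr_const; apply: ler_sum => j _.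
by rewrite normrM ler_pM ?normr_mx_entry.
Qed.

Lemma continuous_mulmxr m n k (v : 'M[R]_(n, k)) :
  continuous (mulmxr v : 'M[R]_(m, n) -> 'M[R]_(m, k)).
Proof.
apply: bounded_linear_continuous; apply/bounded_funP => r.
exists (n%:R * r * `|v|) => M Mr /=.
apply: le_trans (normr_mulmx_le M v) _.
by rewrite ler_wpM2r // ler_wpM2l.
Qed.

Lemma continuous_residual m n (v : 'cV[R]_n) (w : 'cV[R]_m) :
  continuous (fun M : 'M[R]_(m, n) => `|M *m v - w|).
Proof.
move=> M; apply: continuous_comp; last exact: norm_continuous.
by apply: continuousB; [exact: continuous_mulmxr | exact: cst_continuous].
Qed.

End matrix_norm.

(* Matrices carry a complete uniform structure and a normed one; joining them
   makes Baire's theorem applicable. *)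
HB.instance Definition _ (R : realType) m n := Complete.on 'M[R]_(m, n).

Section liouville_sets.
Variables (R : realType) (m n : nat).

Lemma intvec_eq0 k (z : 'cV[int]_k) : (intvec R z == 0) = (z == 0).
Proof.
apply/eqP/eqP => [/matrixP zR|->]; apply/matrixP => i j; last by rewrite !mxE.
by move: (zR i j); rewrite !mxE => /eqP; rewrite intr_eq0 => /eqP.
Qed.

Lemma open_residual_neq0 (v : 'cV[R]_n) (w : 'cV[R]_m) :
  open [set M : 'M[R]_(m, n) | M *m v - w != 0].
Proof.
have -> : [set M : 'M[R]_(m, n) | M *m v - w != 0] =
          (fun M : 'M[R]_(m, n) => `|M *m v - w|) @^-1` [set r | 0 < r].
  by apply/seteqP; split => M /=; rewrite normr_gt0.
by apply: open_comp (@open_gt _ 0) => M _; exact: continuous_residual.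
Qed.

Lemma open_residual_lt (v : 'cV[R]_n) (w : 'cV[R]_m) c :
  open [set M : 'M[R]_(m, n) | `|M *m v - w| < c].
Proof.
apply: (@open_comp _ _ (fun M : 'M[R]_(m, n) => `|M *m v - w|) [set r | r < c]).
  by move=> M _; exact: continuous_residual.
exact: open_lt.
Qed.

Lemma dense_residual_neq0 (v : 'cV[R]_n) (w : 'cV[R]_m) : (0 < m)%N ->
  (v != 0) || (w != 0) -> dense [set M : 'M[R]_(m, n) | M *m v - w != 0].
Proof.
move=> m_gt0 vw; apply: norm_approx_dense => M e e0.
have [Mvw | /negPn/eqP Mvw] := boolP (M *m v - w != 0).
  by exists M; rewrite // subrr normr0.
have /matrix0Pn[j [l vj]] : v != 0.
  apply: contraTneq vw => v0; rewrite v0 eqxx /= negbK.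
  by move: Mvw; rewrite v0 mulmx0 sub0r => /eqP; rewrite oppr_eq0.
rewrite [l]ord1 in vj; pose D := delta_mx (Ordinal m_gt0) j : 'M[R]_(m, n).
have Dv : D *m v != 0.
  apply/matrix0Pn; exists (Ordinal m_gt0), 0.
  rewrite mxE (bigD1 j) //= big1 => [|j' /negbTE j'j]; last first.
    by rewrite mxE j'j andbF mul0r.
  by rewrite mxE !eqxx mul1r addr0.
have D1 : `|D| <= 1.
  apply: normr_mx_le => // i' j'; rewrite mxE.
  by case: (_ && _); rewrite ?normr1 ?normr0.
exists (M + (e / 2) *: D).
  rewrite /= mulmxDl -scalemxAl addrAC Mvw add0r scaler_eq0 negb_or Dv andbT.
  by rewrite mulf_neq0 ?gt_eqF.
rewrite opprD addrA subrr sub0r normrN normrZ gtr0_norm ?divr_gt0 //.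
have : e / 2 * `|D| <= e / 2 * 1 by rewrite ler_wpM2l // divr_ge0 // ltW.
lra.
Qed.

Definition approximable N : set 'M[R]_(m, n) :=
  [set M | exists p q, q != 0 /\
     supnorm (M *m intvec R q - intvec R p) < supnorm (intvec R q) ^- N].

Lemma open_approximable N : open (approximable N).
Proof.
rewrite openE => M [p [q [q0 Mpq]]].
have := @open_residual_lt (intvec R q) (intvec R p) (supnorm (intvec R q) ^- N).
rewrite openE => /(_ M) Oc.
apply: filterS (Oc _); last by rewrite /= -supnormE.
by move=> M' /= M'pq; exists p, q; rewrite supnormE.
Qed.

Definition integer_relation : set 'M[R]_(m, n) :=
  [set M | exists p q, q != 0 /\ M *m intvec R q = intvec R p].

Lemma integer_relation_approximable N : integer_relation `<=` approximable N.
Proof.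
move=> M [p [q [q0 Mpq]]]; exists p, q; split => //.
by rewrite Mpq subrr !supnormE normr0 invr_gt0 exprn_gt0 // normr_gt0 intvec_eq0.
Qed.

Lemma dense_integer_relation : (0 < n)%N -> dense integer_relation.
Proof.
move=> n_gt0; apply: norm_approx_dense => M e e0; pose j0 := Ordinal n_gt0.
pose Q := Num.Def.archi_bound e^-1.
have eQ : e^-1 < Q%:R by apply: archi_boundP; rewrite invr_ge0 ltW.
have Q_gt0 : 0 < Q%:R :> R by apply: lt_trans eQ; rewrite invr_gt0.
have eQ1 : 1 < e * Q%:R by have := eQ; rewrite -(ltr_pM2l e0) mulfV ?gt_eqF.
(* Round column j0 of M to the denominator Q > 1 / e. *)
pose fl i := Num.floor (Q%:R * M i j0).
pose M' := \matrix_(i, j) if j == j0 then (fl i)%:~R / Q%:R else M i j.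
exists M'.
  exists (\col_i fl i), (\col_j (if j == j0 then Q%:Z else 0)); split.
    apply/matrix0Pn; exists j0, 0; rewrite mxE eqxx.
    by rewrite eqz_nat -lt0n -(ltr0n R).
  apply/matrixP => i k; rewrite !mxE (bigD1 j0) //= big1 => [|j /negbTE jj0].
    by rewrite !mxE eqxx addr0 divfK // gt_eqF.
  by rewrite !mxE jj0 mulr0.
apply: normr_mx_lt => // i j; rewrite !mxE; case: eqP => [->|_].
  have fl_le := floor_le (Q%:R * M i j0).
  have fl_gt := floorD1_gt (Q%:R * M i j0).
  rewrite intrD -/(fl i) in fl_gt fl_le.
  have -> : M i j0 - (fl i)%:~R / Q%:R = (Q%:R * M i j0 - (fl i)%:~R) / Q%:R.
    by field; rewrite gt_eqF.
  rewrite ger0_norm ?divr_ge0 ?subr_ge0 ?(ltW Q_gt0) // ltr_pdivrMr //; lra.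
by rewrite subrr normr0.
Qed.

Local Notation liouville_index :=
  ({qp : 'cV[int]_n * 'cV[int]_m | (qp.1 != 0) || (qp.2 != 0)} + nat)%type.

Definition liouville_set (s : liouville_index) : set 'M[R]_(m, n) :=
  match s with
  | inl qp => [set M | M *m intvec R (val qp).1 - intvec R (val qp).2 != 0]
  | inr N => approximable N
  end.

Lemma liouville_of_liouville_sets M : (forall s, liouville_set s M) -> liouville M.
Proof.
move=> LM; split => [q p qp | N]; last exact: (LM (inr N)).
exact: (LM (inl (exist _ (q, p) qp))).
Qed.

Lemma open_dense_liouville_set : (0 < m)%N -> (0 < n)%N ->
  forall s, open (liouville_set s) /\ dense (liouville_set s).
Proof.
move=> m_gt0 n_gt0 [[[q p] qp] | N] /=.
  split; first exact: open_residual_neq0.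
  by apply: dense_residual_neq0; rewrite // !intvec_eq0.
split; first exact: open_approximable.
move=> O O0 oO; have [M [OM RM]] := dense_integer_relation n_gt0 O0 oO.
by exists M; split => //; exact: integer_relation_approximable.
Qed.

End liouville_sets.

Theorem mainTheorem8 (R : realType) (m n : nat) (hm : (1 <= m)%N) (hn : (1 <= n)%N)
  (A : 'M[R]_(m, n)) :
  exists B C : 'M[R]_(m, n), A = B + C /\ liouville B /\ liouville C.
Proof.
have [B [LB LAB]] := Baire_decomposition (open_dense_liouville_set R hm hn) A.
exists B, (A - B); split; first by rewrite addrC subrK.
by split; apply: liouville_of_liouville_sets.
Qed.
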